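(* Let $G$ be a group and let $\varphi,\psi\in\mathrm{Aut}(G)$ with $\varphi\psi=\psi\varphi$. On $G$ define $a*b=\varphi(ab^{-1})b$ and $a\circ b=\psi(ab^{-1})b$. Then for all integers $k,l$, the groupoid $(G,*^k\circ^l)$, with operation $a\,( *^k\circ^l)\,b=(a*^k b)\circ^l b$, is a quandle.
   Context: A quandle is a set with binary operation $*$ satisfying $x*x=x$, unique right division, and $(x*y)*z=(x*z)*(y*z)$; both operations above are quandle operations (generalised Alexander quandles). Powers: $a*^0b=a$; for $n\ge1$, $a*^nb=(a*^{n-1}b)*b$ and $a*^{-n}b$ is obtained by applying $n$ times the right inverse operation $\bar*$ (defined by $a=c*b\iff c=a\,\bar*\,b$); similarly for $\circ$. *)

From Stdlib Require Import ZArith ClassicalEpsilon.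

Record group := Group {
  carrier :> Type;
  gmul : carrier -> carrier -> carrier;
  ginv : carrier -> carrier;
  gone : carrier;
  gmulA : forall x y z, gmul x (gmul y z) = gmul (gmul x y) z;
  gmul1l : forall x, gmul gone x = x;
  gmul1r : forall x, gmul x gone = x;
  gmulVl : forall x, gmul (ginv x) x = gone;
  gmulVr : forall x, gmul x (ginv x) = gone
}.

Definition is_aut {G : group} (f : G -> G) : Prop :=
  (forall x y : G, f (gmul G x y) = gmul G (f x) (f y)) /\
  (forall x y : G, f x = f y -> x = y) /\
  (forall y : G, exists x : G, f x = y).

Definition is_quandle {T : Type} (op : T -> T -> T) : Prop :=
  (forall x : T, op x x = x) /\
  (forall a b : T, exists! c : T, op c b = a) /\
  (forall x y z : T, op (op x y) z = op (op x z) (op y z)).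

Definition rdiv {T : Type} (i : inhabited T) (op : T -> T -> T) (a b : T) : T :=
  epsilon i (fun c => op c b = a).

Definition qpow {T : Type} (i : inhabited T) (op : T -> T -> T) (n : Z) (a b : T) : T :=
  if (0 <=? n)%Z then Nat.iter (Z.to_nat n) (fun x => op x b) a
  else Nat.iter (Z.to_nat (- n)) (fun x => rdiv i op x b) a.

Definition group_inhabited (G : group) : inhabited G := inhabits (gone G).

Definition alex_op {G : group} (f : G -> G) (a b : G) : G :=
  gmul G (f (gmul G a (ginv G b))) b.

(** For an automorphism [f], the operation [alex_op f] satisfies
    [alex_op f (alex_op g a b) b = alex_op (f \o g) a b], and the right
    division of [alex_op f] is [alex_op f^-1].  Hence every power
    [a *^k b] is [alex_op (phi^k) a b] and [(a *^k b) o^l b] is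
    [alex_op (psi^l \o phi^k) a b]: a generalised Alexander quandle of the
    automorphism [psi^l \o phi^k]. *)

From Stdlib Require Import ZArith ClassicalEpsilon.

Section Alexander.

Variable G : group.

Local Infix "*" := (gmul G).
Local Notation "x ^-1" := (ginv G x) (at level 3, left associativity, format "x ^-1").
Local Notation "1" := (gone G).

Lemma mulgK (x y : G) : x * y * y^-1 = x.
Proof. now rewrite <- gmulA, gmulVr, gmul1r. Qed.

Lemma mulgKV (x y : G) : x * y^-1 * y = x.
Proof. now rewrite <- gmulA, gmulVl, gmul1r. Qed.

Lemma mulIg (x y z : G) : x * z = y * z -> x = y.
Proof. intro E. now rewrite <- (mulgK x z), <- (mulgK y z), E. Qed.

Lemma mulgI (x y z : G) : z * x = z * y -> x = y.
Proof.
  intro E. now rewrite <- (gmul1l G x), <- (gmul1l G y), <- (gmulVl G z), <- !gmulA, E.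
Qed.

Lemma invg_unique (x y : G) : x * y = 1 -> y = x^-1.
Proof. intro E. apply (mulgI _ _ x). now rewrite E, gmulVr. Qed.

Lemma invgK (x : G) : x^-1^-1 = x.
Proof. symmetry. apply invg_unique, gmulVl. Qed.

Lemma invMg (x y : G) : (x * y)^-1 = y^-1 * x^-1.
Proof. symmetry. apply invg_unique. now rewrite gmulA, mulgK, gmulVr. Qed.

Lemma aut1 (f : G -> G) : is_aut f -> f 1 = 1.
Proof.
  intros [f_mul _]. apply (mulgI _ _ (f 1)). now rewrite <- f_mul, !gmul1r.
Qed.

Lemma autV (f : G -> G) (x : G) : is_aut f -> f x^-1 = (f x)^-1.
Proof.
  intro f_aut. apply invg_unique. rewrite <- (proj1 f_aut), gmulVr. now apply aut1.
Qed.

Lemma aut_id : is_aut (fun x : G => x).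
Proof. repeat split; eauto. Qed.

Lemma aut_comp (f g : G -> G) : is_aut f -> is_aut g -> is_aut (fun x => f (g x)).
Proof.
  intros [f_mul [f_inj f_surj]] [g_mul [g_inj g_surj]]. repeat split.
  - intros x y. now rewrite g_mul, f_mul.
  - auto.
  - intro y. destruct (f_surj y) as [z <-]. destruct (g_surj z) as [x <-]. eauto.
Qed.

Lemma aut_iter (f : G -> G) (n : nat) : is_aut f -> is_aut (Nat.iter n f).
Proof.
  intro f_aut. induction n as [|n IH]; simpl.
  - exact aut_id.
  - exact (aut_comp _ _ f_aut IH).
Qed.

Definition aut_inv (f : G -> G) (y : G) : G :=
  epsilon (inhabits 1) (fun x => f x = y).

Lemma aut_invK (f : G -> G) (y : G) : is_aut f -> f (aut_inv f y) = y.
Proof. intros [_ [_ f_surj]]. unfold aut_inv. apply epsilon_spec, f_surj. Qed.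

Lemma aut_aut_inv (f : G -> G) : is_aut f -> is_aut (aut_inv f).
Proof.
  intro f_aut. pose proof f_aut as [f_mul [f_inj _]]. repeat split.
  - intros x y. apply f_inj. now rewrite f_mul, !aut_invK.
  - intros x y E. now rewrite <- (aut_invK f x), <- (aut_invK f y), E.
  - intro y. exists (f y). apply f_inj. now rewrite aut_invK.
Qed.

Lemma alex_op_inj (f : G -> G) (b c c' : G) :
  is_aut f -> alex_op f c b = alex_op f c' b -> c = c'.
Proof.
  intros [_ [f_inj _]] E. unfold alex_op in E.
  now apply mulIg, f_inj, mulIg in E.
Qed.

Lemma alex_op_comp (f g : G -> G) (a b : G) :
  alex_op f (alex_op g a b) b = alex_op (fun x => f (g x)) a b.
Proof. unfold alex_op. now rewrite mulgK. Qed.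

Lemma alex_op_id (a b : G) : alex_op (fun x => x) a b = a.
Proof. apply mulgKV. Qed.

Lemma alex_op_aut_invK (f : G -> G) (a b : G) :
  is_aut f -> alex_op f (alex_op (aut_inv f) a b) b = a.
Proof.
  intro f_aut. rewrite alex_op_comp. unfold alex_op.
  rewrite aut_invK by exact f_aut. apply mulgKV.
Qed.

Lemma rdiv_alex_op (i : inhabited G) (f : G -> G) (a b : G) :
  is_aut f -> rdiv i (alex_op f) a b = alex_op (aut_inv f) a b.
Proof.
  intro f_aut. apply (alex_op_inj f b _ _ f_aut).
  rewrite alex_op_aut_invK by exact f_aut.
  apply (epsilon_spec i (fun c => alex_op f c b = a)).
  exists (alex_op (aut_inv f) a b). now apply alex_op_aut_invK.
Qed.

Lemma iter_alex_op (f : G -> G) (F : G -> G) (b : G) :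
  (forall x, F x = alex_op f x b) ->
  forall n a, Nat.iter n F a = alex_op (Nat.iter n f) a b.
Proof.
  intros F_alex n. induction n as [|n IH]; intro a; simpl.
  - symmetry. apply alex_op_id.
  - now rewrite F_alex, IH, alex_op_comp.
Qed.

Lemma qpow_alex_op (f : G -> G) (n : Z) : is_aut f ->
  exists g, is_aut g /\
    forall a b, qpow (group_inhabited G) (alex_op f) n a b = alex_op g a b.
Proof.
  intro f_aut. unfold qpow. destruct (0 <=? n)%Z.
  - exists (Nat.iter (Z.to_nat n) f). split.
    + now apply aut_iter.
    + intros a b. now apply iter_alex_op.
  - exists (Nat.iter (Z.to_nat (- n)) (aut_inv f)). split.
    + now apply aut_iter, aut_aut_inv.
    + intros a b. apply iter_alex_op. intro x. now apply rdiv_alex_op.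
Qed.

Lemma alex_op_quandle (h : G -> G) : is_aut h -> is_quandle (alex_op h).
Proof.
  intro h_aut. pose proof h_aut as [h_mul [_ h_surj]]. unfold alex_op. repeat split.
  - intro x. now rewrite gmulVr, aut1, gmul1l.
  - intros a b. destruct (h_surj (a * b^-1)) as [x hx].
    exists (x * b). split.
    + now rewrite mulgK, hx, mulgKV.
    + intros c hc. apply (alex_op_inj h b _ _ h_aut).
      unfold alex_op. now rewrite hc, mulgK, hx, mulgKV.
  - intros x y z.
    assert (quot : h (x * z^-1) * z * (h (y * z^-1) * z)^-1 = h (x * y^-1)).
    { rewrite invMg, gmulA, mulgK, <- autV, <- h_mul by exact h_aut. f_equal.
      now rewrite invMg, invgK, gmulA, mulgKV. }
    now rewrite quot, !h_mul, !gmulA.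
Qed.

End Alexander.

Lemma is_quandle_ext (T : Type) (op op' : T -> T -> T) :
  (forall a b, op a b = op' a b) -> is_quandle op -> is_quandle op'.
Proof.
  intros E [op_idem [op_div op_dist]]. repeat split.
  - intro x. now rewrite <- E.
  - intros a b. destruct (op_div a b) as [c [hc c_uniq]]. exists c. split.
    + now rewrite <- E.
    + intros c' hc'. apply c_uniq. now rewrite E.
  - intros x y z. rewrite <- !E. apply op_dist.
Qed.

Theorem proposition4p19 (G : group) (phi psi : G -> G)
  (hphi : is_aut phi) (hpsi : is_aut psi)
  (hcomm : forall x : G, phi (psi x) = psi (phi x)) (k l : Z) :
  is_quandle (fun a b : G =>
    qpow (group_inhabited G) (alex_op psi) l
      (qpow (group_inhabited G) (alex_op phi) k a b) b).
Proof.
  destruct (qpow_alex_op G phi k hphi) as [f [f_aut phi_pow]].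
  destruct (qpow_alex_op G psi l hpsi) as [g [g_aut psi_pow]].
  apply (is_quandle_ext _ (alex_op (fun x => g (f x)))).
  - intros a b. now rewrite phi_pow, psi_pow, alex_op_comp.
  - apply alex_op_quandle, aut_comp; assumption.
Qed.
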